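(* Let $\mu$ be a Borel probability measure on $\mathbb{R}$ with $m_1(\mu)=0$, $m_2(\mu)=1$ and $m_4(\mu)<\infty$. Then $$L(\mu,\mathbf{b})\le \frac72\sqrt[3]{m_4(\mu)-1}.$$
   Context: $m_k(\mu)=\int x^k\,d\mu(x)$. $\mathbf{b}=\frac12\delta_{-1}+\frac12\delta_1$. The Lévy distance between probability measures with distribution functions $F,G$ is $L=\inf\{\epsilon>0: F(x-\epsilon)-\epsilon\le G(x)\le F(x+\epsilon)+\epsilon\ \forall x\in\mathbb{R}\}$. *)

From Stdlib Require Import Reals Lra.
Open Scope R_scope.

Inductive borel : (R -> Prop) -> Prop :=
| borel_open (U : R -> Prop) : open_set U -> borel U
| borel_compl (A : R -> Prop) : borel A -> borel (fun x => ~ A x)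
| borel_union (A : nat -> R -> Prop) :
    (forall n, borel (A n)) -> borel (fun x => exists n, A n x).

(* Borel probability measure (values on non-Borel sets are irrelevant). *)
Definition is_prob_measure (mu : (R -> Prop) -> R) : Prop :=
  (forall A, borel A -> 0 <= mu A) /\
  mu (fun _ => True) = 1 /\
  (forall A : nat -> R -> Prop,
     (forall n, borel (A n)) ->
     (forall n m x, n <> m -> A n x -> A m x -> False) ->
     infinite_sum (fun n => mu (A n)) (mu (fun x => exists n, A n x))).

Definition lower_sums (mu : (R -> Prop) -> R) (f : R -> R) (v : R) : Prop :=
  exists (n : nat) (a : nat -> R) (A : nat -> R -> Prop),
    (forall i, (i <= n)%nat -> borel (A i)) /\
    (forall i j x, (i <= n)%nat -> (j <= n)%nat -> i <> j -> A i x -> A j x -> False) /\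
    (forall i, (i <= n)%nat -> 0 <= a i) /\
    (forall i x, (i <= n)%nat -> A i x -> a i <= f x) /\
    v = sum_f_R0 (fun i => a i * mu (A i)) n.

(* Lebesgue integral of a nonnegative function, when finite:
   the supremum of the lower sums. *)
Definition nonneg_integral (mu : (R -> Prop) -> R) (f : R -> R) (v : R) : Prop :=
  is_lub (lower_sums mu f) v.

Definition has_moment (mu : (R -> Prop) -> R) (k : nat) (m : R) : Prop :=
  exists p q,
    nonneg_integral mu (fun x => Rmax (x ^ k) 0) p /\
    nonneg_integral mu (fun x => Rmax (- (x ^ k)) 0) q /\
    m = p - q.

Definition cdf (mu : (R -> Prop) -> R) (x : R) : R := mu (fun y => y <= x).

(* Distribution function of b = (delta_{-1} + delta_1)/2. *)
Definition bern_cdf (x : R) : R :=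
  if Rlt_dec x (-1) then 0 else if Rlt_dec x 1 then 1/2 else 1.

Definition levy_ok (F G : R -> R) (eps : R) : Prop :=
  eps > 0 /\ forall x, F (x - eps) - eps <= G x /\ G x <= F (x + eps) + eps.

Definition levy_dist (F G : R -> R) (L : R) : Prop :=
  (forall e, levy_ok F G e -> L <= e) /\
  (forall l, (forall e, levy_ok F G e -> l <= e) -> l <= L).

(* Let s = m4 - 1, which is the integral of (x^2 - 1)^2 since m2 = 1.  Chebyshev's
   inequality for x^2 - 1 shows that mu puts mass at most s / (4 e^2) beyond +-(1 + e)
   and at most s / e^2 strictly between -(1 - e) and 1 - e.  As the mean vanishes,
   t := int x^+ = int x^-; Markov's inequality bounds the mass below -(1 - e) by
   t / (1 - e), and the pointwise comparison of x^+ with (x^2 - 1)^2 bounds t by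
   mu [1 - e, oo) + e^2 / 4 + s / e^2.  Once 343 s <= 8 e^3 these estimates force
   mass at least 1/2 - e on each of [1 - e, oo) and (-oo, -(1 - e)], which is what
   the Levy inequalities at distance e require.  The integral is only given as a
   supremum of lower sums, so its monotonicity and linearity are first derived by
   refining signed simple functions into partitions. *)

From Stdlib Require Import Reals Lra Psatz List.
From Stdlib Require Import FunctionalExtensionality PropExtensionality ClassicalDescription.
Open Scope R_scope.

(** * Borel sets *)

Lemma pred_ext (A B : R -> Prop) : (forall x, A x <-> B x) -> A = B.
Proof.
  intro H; apply functional_extensionality; intro x; apply propositional_extensionality; auto.
Qed.

Lemma borel_ext A B : borel A -> (forall x, A x <-> B x) -> borel B.
Proof. intros HA H; rewrite <- (pred_ext A B H); exact HA. Qed.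

Lemma borel_empty : borel (fun _ => False).
Proof. apply borel_open; intros x []. Qed.

Lemma borel_full : borel (fun _ => True).
Proof.
  apply borel_open; intros x _; exists (mkposreal 1 Rlt_0_1); intros y _; trivial.
Qed.

Lemma borel_gt a : borel (fun y => a < y).
Proof.
  apply borel_open; intros x Hx; exists (mkposreal (x - a) ltac:(lra)).
  intros y Hy; unfold disc in Hy; simpl in Hy; apply Rabs_def2 in Hy; lra.
Qed.

Lemma borel_lt a : borel (fun y => y < a).
Proof.
  apply borel_open; intros x Hx; exists (mkposreal (a - x) ltac:(lra)).
  intros y Hy; unfold disc in Hy; simpl in Hy; apply Rabs_def2 in Hy; lra.
Qed.

Lemma borel_le a : borel (fun y => y <= a).
Proof.
  apply borel_ext with (fun y => ~ a < y); [apply borel_compl, borel_gt|].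
  intro y; split; intro; lra.
Qed.

Lemma borel_ge a : borel (fun y => a <= y).
Proof.
  apply borel_ext with (fun y => ~ y < a); [apply borel_compl, borel_lt|].
  intro y; split; intro; lra.
Qed.

Definition two_sets (A B : R -> Prop) (n : nat) : R -> Prop :=
  match n with 0%nat => A | 1%nat => B | _ => fun _ => False end.

Lemma two_sets_union A B x : (exists n, two_sets A B n x) <-> A x \/ B x.
Proof.
  split.
  - intros [[|[|n]] H]; simpl in H; tauto.
  - intros [H|H]; [exists 0%nat|exists 1%nat]; exact H.
Qed.

Lemma borel_two_sets A B : borel A -> borel B -> forall n, borel (two_sets A B n).
Proof. intros HA HB [|[|n]]; simpl; auto using borel_empty. Qed.

Lemma borel_or A B : borel A -> borel B -> borel (fun x => A x \/ B x).
Proof.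
  intros HA HB; apply borel_ext with (fun x => exists n, two_sets A B n x).
  - apply borel_union, borel_two_sets; assumption.
  - apply two_sets_union.
Qed.

Lemma borel_and A B : borel A -> borel B -> borel (fun x => A x /\ B x).
Proof.
  intros HA HB; apply borel_ext with (fun x => ~ (~ A x \/ ~ B x)).
  - apply borel_compl, borel_or; apply borel_compl; assumption.
  - intro x; split; [intro H; split; apply NNPP; tauto | tauto].
Qed.

Lemma borel_ge_scaled a c : borel (fun x => a <= c * x).
Proof.
  destruct (Rtotal_order c 0) as [Hc|[->|Hc]].
  - apply borel_ext with (fun x => x <= a / c); [apply borel_le|].
    assert (c * (a / c) = a) by (field; lra). intro x; split; intro; nra.
  - destruct (Rle_dec a 0).
    + apply borel_ext with (fun _ => True); [apply borel_full|]. intro x; split; intro; lra.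
    + apply borel_ext with (fun _ => False); [apply borel_empty|]. intro x; split; intro; lra.
  - apply borel_ext with (fun x => a / c <= x); [apply borel_ge|].
    assert (c * (a / c) = a) by (field; lra). intro x; split; intro; nra.
Qed.

Definition indicator (A : R -> Prop) (x : R) : R :=
  if excluded_middle_informative (A x) then 1 else 0.

Lemma indicator_in A x : A x -> indicator A x = 1.
Proof. unfold indicator; destruct excluded_middle_informative; tauto. Qed.

Lemma indicator_out A x : ~ A x -> indicator A x = 0.
Proof. unfold indicator; destruct excluded_middle_informative; tauto. Qed.

Lemma indicator_cases A x : (A x /\ indicator A x = 1) \/ (~ A x /\ indicator A x = 0).
Proof. unfold indicator; destruct excluded_middle_informative; tauto. Qed.

Lemma indicator_ge0 A x : 0 <= indicator A x.
Proof. destruct (indicator_cases A x) as [[_ ->]|[_ ->]]; lra. Qed.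

Lemma indicator_and A B x : indicator (fun y => A y /\ B y) x = indicator A x * indicator B x.
Proof.
  destruct (indicator_cases A x) as [[HA ->]|[HA ->]];
  destruct (indicator_cases B x) as [[HB ->]|[HB ->]];
  [rewrite indicator_in | rewrite indicator_out ..]; try tauto; ring.
Qed.

Lemma indicator_and_not A B x :
  indicator (fun y => A y /\ ~ B y) x = indicator A x * (1 - indicator B x).
Proof.
  destruct (indicator_cases A x) as [[HA ->]|[HA ->]];
  destruct (indicator_cases B x) as [[HB ->]|[HB ->]];
  [rewrite indicator_out | rewrite indicator_in | rewrite indicator_out ..]; try tauto; ring.
Qed.

(* A formal combination [sum_i c_i 1_{A_i}] of indicators, with possibly negative
   coefficients and overlapping sets. *)
Definition simple := list (R * (R -> Prop)).

Fixpoint simple_eval (s : simple) (x : R) : R :=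
  match s with nil => 0 | p :: s' => fst p * indicator (snd p) x + simple_eval s' x end.

Fixpoint simple_cover (s : simple) (x : R) : R :=
  match s with nil => 0 | p :: s' => indicator (snd p) x + simple_cover s' x end.

Definition simple_borel (s : simple) : Prop := forall p, In p s -> borel (snd p).

Definition simple_partition (s : simple) : Prop :=
  simple_borel s /\ forall x, simple_cover s x = 1.

Definition simple_scale (c : R) (s : simple) : simple := map (fun p => (c * fst p, snd p)) s.

Lemma simple_borel_cons p s : simple_borel (p :: s) -> borel (snd p) /\ simple_borel s.
Proof. intro H; split; [apply H; left; reflexivity | intros q Hq; apply H; right; exact Hq]. Qed.

Lemma simple_borel_app s1 s2 : simple_borel s1 -> simple_borel s2 -> simple_borel (s1 ++ s2).
Proof. intros H1 H2 p Hp; apply in_app_or in Hp; destruct Hp; auto. Qed.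

Lemma simple_borel_scale c s : simple_borel s -> simple_borel (simple_scale c s).
Proof.
  intros H p Hp; apply in_map_iff in Hp; destruct Hp as [q [<- Hq]]; exact (H q Hq).
Qed.

Lemma simple_eval_app s1 s2 x : simple_eval (s1 ++ s2) x = simple_eval s1 x + simple_eval s2 x.
Proof. induction s1 as [|p s1 IH]; simpl; [ring|]; rewrite IH; ring. Qed.

Lemma simple_eval_scale c s x : simple_eval (simple_scale c s) x = c * simple_eval s x.
Proof. induction s as [|p s IH]; simpl; [ring|]; rewrite IH; ring. Qed.

Lemma simple_cover_ge0 s x : 0 <= simple_cover s x.
Proof. induction s as [|p s IH]; simpl; [lra|]; pose proof (indicator_ge0 (snd p) x); lra. Qed.

Lemma simple_cover_ge1 s p x : In p s -> snd p x -> 1 <= simple_cover s x.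
Proof.
  induction s as [|q s IH]; simpl; [tauto|]; intros [->|H] Hx.
  - rewrite indicator_in by exact Hx; pose proof (simple_cover_ge0 s x); lra.
  - pose proof (indicator_ge0 (snd q) x); specialize (IH H Hx); lra.
Qed.

Lemma simple_cover_cons_le1 q s x :
  simple_cover (q :: s) x <= 1 -> simple_cover s x <= 1 /\ (snd q x -> simple_cover s x <= 0).
Proof.
  simpl; intro H; pose proof (indicator_ge0 (snd q) x); split; [lra|].
  intro Hq; rewrite indicator_in in H by exact Hq; lra.
Qed.

Lemma simple_eval_uncovered s x : simple_cover s x <= 0 -> simple_eval s x = 0.
Proof.
  induction s as [|q s IH]; simpl; [auto|]; intro H.
  pose proof (indicator_ge0 (snd q) x); pose proof (simple_cover_ge0 s x).
  replace (indicator (snd q) x) with 0 by lra; rewrite IH by lra; ring.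
Qed.

Lemma simple_eval_in_piece s p x :
  simple_cover s x <= 1 -> In p s -> snd p x -> simple_eval s x = fst p.
Proof.
  induction s as [|q s IH]; simpl; [tauto|]; intros Hc Hp Hx.
  apply simple_cover_cons_le1 in Hc; destruct Hc as [Hc Hq]; destruct Hp as [->|Hp].
  - rewrite indicator_in, simple_eval_uncovered by auto; ring.
  - assert (~ snd q x) by (intro Hq'; pose proof (simple_cover_ge1 s p x Hp Hx); specialize (Hq Hq'); lra).
    rewrite indicator_out, IH by auto; ring.
Qed.

Lemma simple_covered s x : 0 < simple_cover s x -> exists p, In p s /\ snd p x.
Proof.
  induction s as [|q s IH]; simpl; [lra|]; intro H.
  destruct (indicator_cases (snd q) x) as [[Hq _]|[_ E]].
  - exists q; auto.
  - rewrite E in H; destruct IH as [p [Hp Hx]]; [lra|]; exists p; auto.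
Qed.

Lemma borel_simple_support s : simple_borel s -> borel (fun x => exists p, In p s /\ snd p x).
Proof.
  induction s as [|q s IH]; intro Hb.
  - apply borel_ext with (fun _ => False); [apply borel_empty|].
    intro x; simpl; split; [tauto|]; intros [p [[] _]].
  - apply simple_borel_cons in Hb; destruct Hb as [Hq Hs].
    apply borel_ext with (fun x => snd q x \/ exists p, In p s /\ snd p x).
    + apply borel_or; auto.
    + intro x; simpl; split.
      * intros [H|[p [Hp H]]]; [exists q|exists p]; auto.
      * intros [p [[<-|Hp] H]]; [left; auto | right; exists p; auto].
Qed.

Definition refine (a : R) (A : R -> Prop) (s : simple) : simple :=
  flat_map (fun p => (fst p + a, fun x => snd p x /\ A x)
                       :: (fst p, fun x => snd p x /\ ~ A x) :: nil) s.

Lemma refine_cover a A s x : simple_cover (refine a A s) x = simple_cover s x.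
Proof.
  induction s as [|p s IH]; simpl; auto; rewrite IH, indicator_and, indicator_and_not; ring.
Qed.

Lemma refine_eval a A s x :
  simple_eval (refine a A s) x = simple_eval s x + a * indicator A x * simple_cover s x.
Proof.
  induction s as [|p s IH]; simpl; [ring|]; rewrite IH, indicator_and, indicator_and_not; ring.
Qed.

Lemma refine_borel a A s : borel A -> simple_borel s -> simple_borel (refine a A s).
Proof.
  intro HA; induction s as [|p s IH]; simpl; [intros _ q []|].
  intros Hb; apply simple_borel_cons in Hb; destruct Hb as [Hp Hs].
  intros q [<-|[<-|Hq]]; simpl.
  - apply borel_and; auto.
  - apply borel_and; [|apply borel_compl]; auto.
  - apply IH; auto.
Qed.

Definition empty_piece : R * (R -> Prop) := (0, fun _ => False).

Lemma partition_nth_disjoint s : (forall x, simple_cover s x <= 1) ->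
  forall i j x, i <> j -> snd (nth i s empty_piece) x -> snd (nth j s empty_piece) x -> False.
Proof.
  assert (Hin : forall k s x, snd (nth k s empty_piece) x -> In (nth k s empty_piece) s).
  { intros k s' x Hx; destruct (nth_in_or_default k s' empty_piece) as [|E]; auto.
    rewrite E in Hx; destruct Hx. }
  induction s as [|q s IH]; intros Hc i j x Hij Hi Hj.
  - destruct i, j; simpl in *; auto.
  - destruct (simple_cover_cons_le1 q s x (Hc x)) as [_ Hq].
    destruct i as [|i], j as [|j]; simpl in Hi, Hj.
    + lia.
    + pose proof (simple_cover_ge1 s _ x (Hin j s x Hj) Hj); specialize (Hq Hi); lra.
    + pose proof (simple_cover_ge1 s _ x (Hin i s x Hi) Hi); specialize (Hq Hj); lra.
    + apply (IH (fun y => proj1 (simple_cover_cons_le1 q s y (Hc y))) i j x); auto.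
Qed.

Fixpoint simple_mass (mu : (R -> Prop) -> R) (s : simple) : R :=
  match s with nil => 0 | p :: s' => fst p * mu (snd p) + simple_mass mu s' end.

Fixpoint mass_within (mu : (R -> Prop) -> R) (A : R -> Prop) (s : simple) : R :=
  match s with nil => 0 | p :: s' => mu (fun x => snd p x /\ A x) + mass_within mu A s' end.

Fixpoint indexed_simple (a : nat -> R) (A : nat -> R -> Prop) (n : nat) : simple :=
  match n with
  | O => (a O, A O) :: nil
  | S m => (a (S m), A (S m)) :: indexed_simple a A m
  end.

Lemma indexed_simple_eval a A n x :
  simple_eval (indexed_simple a A n) x = sum_f_R0 (fun i => a i * indicator (A i) x) n.
Proof. induction n as [|n IH]; simpl; [ring|]; rewrite IH; ring. Qed.

Lemma indexed_simple_borel a A n :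
  (forall i, (i <= n)%nat -> borel (A i)) -> simple_borel (indexed_simple a A n).
Proof.
  induction n as [|n IH]; intros Hb p Hp; simpl in Hp.
  - destruct Hp as [<-|[]]; apply Hb; lia.
  - destruct Hp as [<-|Hp]; [apply Hb; lia | apply IH; auto].
Qed.

Lemma lower_sum_eval_le f a A n x : 0 <= f x ->
  (forall i j x, (i <= n)%nat -> (j <= n)%nat -> i <> j -> A i x -> A j x -> False) ->
  (forall i x, (i <= n)%nat -> A i x -> a i <= f x) ->
  sum_f_R0 (fun i => a i * indicator (A i) x) n <= f x.
Proof.
  intro Hf; induction n as [|n IH]; intros Hd Ha; simpl.
  - destruct (indicator_cases (A 0%nat) x) as [[H ->]|[H ->]]; [rewrite Rmult_1_r; auto | lra].
  - destruct (indicator_cases (A (S n)) x) as [[H ->]|[H ->]].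
    + rewrite sum_eq_R0; [rewrite Rmult_1_r, Rplus_0_l; auto|].
      intros i Hi; rewrite indicator_out; [ring|]; intro Hi'; apply (Hd i (S n) x); auto; lia.
    + rewrite Rmult_0_r, Rplus_0_r; apply IH.
      * intros i j y Hi Hj; apply Hd; lia.
      * intros i y Hi; apply Ha; lia.
Qed.

(** * Probability measures and the integral *)

Section ProbabilityMeasure.

Variable mu : (R -> Prop) -> R.
Hypothesis mu_prob : is_prob_measure mu.

Lemma measure_ext A B : (forall x, A x <-> B x) -> mu A = mu B.
Proof. intro H; rewrite (pred_ext A B H); reflexivity. Qed.

Lemma measure_ge0 A : borel A -> 0 <= mu A.
Proof. apply mu_prob. Qed.

Lemma measure_full : mu (fun _ => True) = 1.
Proof. apply mu_prob. Qed.

(* The partial sums [(n+1) mu(empty)] of the constant empty sequence converge to [mu(empty)]. *)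
Lemma measure_empty : mu (fun _ => False) = 0.
Proof.
  destruct mu_prob as [_ [_ Hadd]].
  pose proof (Hadd (fun _ _ => False) (fun _ => borel_empty) (fun _ _ _ _ h _ => h)) as HS.
  cbv beta in HS; rewrite (measure_ext (fun _ => exists _ : nat, False) (fun _ => False)) in HS by firstorder.
  set (c := mu (fun _ => False)) in *.
  destruct (Req_dec c 0) as [|Hc]; auto; exfalso.
  assert (0 < Rabs c) by (apply Rabs_pos_lt; auto).
  destruct (HS (Rabs c / 2)) as [N HN]; [lra|].
  pose proof (HN N ltac:(lia)) as A1; pose proof (HN (S N) ltac:(lia)) as A2.
  rewrite tech5 in A2; unfold R_dist in *; apply Rabs_def2 in A1; apply Rabs_def2 in A2.
  destruct (Rle_or_lt 0 c); [rewrite Rabs_pos_eq in *|rewrite Rabs_left in *]; lra.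
Qed.

Lemma measure_disjoint_or A B : borel A -> borel B -> (forall x, A x -> B x -> False) ->
  mu (fun x => A x \/ B x) = mu A + mu B.
Proof.
  intros HA HB Hd; destruct mu_prob as [_ [_ Hadd]].
  assert (Hdj : forall n m x, n <> m -> two_sets A B n x -> two_sets A B m x -> False).
  { intros [|[|n]] [|[|m]] x Hnm Hn Hm; simpl in *; try contradiction; eauto. }
  pose proof (Hadd _ (borel_two_sets A B HA HB) Hdj) as HS.
  rewrite (measure_ext _ _ (two_sets_union A B)) in HS.
  apply (uniqueness_sum _ _ _ HS).
  intros eps Heps; exists 1%nat; intros n Hn.
  replace (sum_f_R0 (fun n => mu (two_sets A B n)) n) with (mu A + mu B).
  { unfold R_dist; rewrite Rminus_diag, Rabs_R0; exact Heps. }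
  induction n as [|[|n] IH]; [lia | reflexivity |].
  rewrite tech5, <- IH by lia; simpl; rewrite measure_empty; ring.
Qed.

Lemma measure_split A E : borel A -> borel E ->
  mu A = mu (fun x => A x /\ E x) + mu (fun x => A x /\ ~ E x).
Proof.
  intros HA HE; rewrite <- measure_disjoint_or; auto using borel_and, borel_compl.
  - apply measure_ext; intro x; split; [intro; destruct (classic (E x)) | ]; tauto.
  - tauto.
Qed.

Lemma measure_mono A B : borel A -> borel B -> (forall x, A x -> B x) -> mu A <= mu B.
Proof.
  intros HA HB H; rewrite (measure_split B A HB HA).
  rewrite (measure_ext (fun x => B x /\ A x) A) by firstorder.
  pose proof (measure_ge0 _ (borel_and _ _ HB (borel_compl _ HA))); lra.
Qed.

Lemma measure_le1 A : borel A -> mu A <= 1.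
Proof. intro HA; rewrite <- measure_full; apply measure_mono; auto using borel_full. Qed.

Lemma measure_compl A : borel A -> mu (fun x => ~ A x) = 1 - mu A.
Proof.
  intro HA; rewrite <- measure_full, (measure_split _ A borel_full HA).
  rewrite (measure_ext (fun x => True /\ A x) A) by tauto.
  rewrite (measure_ext (fun x => True /\ ~ A x) (fun x => ~ A x)) by tauto; ring.
Qed.

Lemma simple_mass_app s1 s2 : simple_mass mu (s1 ++ s2) = simple_mass mu s1 + simple_mass mu s2.
Proof. induction s1 as [|p s1 IH]; simpl; [ring|]; rewrite IH; ring. Qed.

Lemma simple_mass_scale c s : simple_mass mu (simple_scale c s) = c * simple_mass mu s.
Proof. induction s as [|p s IH]; simpl; [ring|]; rewrite IH; ring. Qed.

Lemma indexed_simple_mass a A n :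
  simple_mass mu (indexed_simple a A n) = sum_f_R0 (fun i => a i * mu (A i)) n.
Proof. induction n as [|n IH]; simpl; [ring|]; rewrite IH; ring. Qed.

Lemma mass_within_disjoint A s : borel A -> simple_borel s -> (forall x, simple_cover s x <= 1) ->
  mass_within mu A s = mu (fun x => A x /\ exists p, In p s /\ snd p x).
Proof.
  intro HA; induction s as [|q s IH]; intros Hb Hc; simpl.
  - rewrite <- measure_empty; apply measure_ext; firstorder.
  - apply simple_borel_cons in Hb; destruct Hb as [Hq Hs].
    rewrite IH by (auto; intro x; apply (simple_cover_cons_le1 q s x (Hc x))).
    rewrite <- measure_disjoint_or; auto using borel_and, borel_simple_support.
    + apply measure_ext; intro x; split.
      * intros [[H1 H2]|[H1 [p [Hp H2]]]]; split; auto; [exists q|exists p]; simpl; auto.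
      * intros [H1 [p [[<-|Hp] H2]]]; [left; auto | right; split; auto; exists p; auto].
    + intros x [H1 _] [_ [p [Hp H2]]].
      destruct (simple_cover_cons_le1 q s x (Hc x)) as [_ Hle].
      pose proof (simple_cover_ge1 s p x Hp H2); specialize (Hle H1); lra.
Qed.

Lemma mass_within_partition A s : borel A -> simple_partition s -> mass_within mu A s = mu A.
Proof.
  intros HA [Hb Hc]; rewrite mass_within_disjoint; auto.
  - apply measure_ext; intro x; split; [tauto|]; intro H; split; auto.
    apply simple_covered; rewrite Hc; lra.
  - intro x; rewrite Hc; lra.
Qed.

Lemma refine_mass a A s : borel A -> simple_borel s ->
  simple_mass mu (refine a A s) = simple_mass mu s + a * mass_within mu A s.
Proof.
  intro HA; induction s as [|p s IH]; intro Hb; simpl; [ring|].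
  apply simple_borel_cons in Hb; destruct Hb as [Hp Hs].
  rewrite IH, (measure_split (snd p) A) by auto; ring.
Qed.

Lemma partition_of_simple s : simple_borel s -> exists d, simple_partition d /\
  (forall x, simple_eval d x = simple_eval s x) /\ simple_mass mu d = simple_mass mu s.
Proof.
  induction s as [|q s IH]; intro Hb.
  - exists ((0, fun _ => True) :: nil); split; [split|split].
    + intros p [<-|[]]; apply borel_full.
    + intro x; simpl; rewrite indicator_in; auto; ring.
    + intro x; simpl; ring.
    + simpl; ring.
  - apply simple_borel_cons in Hb; destruct Hb as [Hq Hs].
    destruct (IH Hs) as [d [[Hdb Hdc] [Hv Hm]]].
    exists (refine (fst q) (snd q) d); split; [split|split].
    + apply refine_borel; auto.
    + intro x; rewrite refine_cover; apply Hdc.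
    + intro x; rewrite refine_eval, Hv, Hdc; simpl; ring.
    + rewrite refine_mass, mass_within_partition, Hm by (auto; split; auto); simpl; ring.
Qed.

Lemma simple_mass_le_lower_sum s : simple_borel s ->
  simple_mass mu s <= sum_f_R0 (fun i => Rmax (fst (nth i s empty_piece)) 0
                                         * mu (snd (nth i s empty_piece))) (length s).
Proof.
  induction s as [|q s IH]; intro Hb.
  - simpl; rewrite measure_empty; lra.
  - apply simple_borel_cons in Hb; destruct Hb as [Hq Hs].
    cbn [length]; rewrite decomp_sum by lia; cbn [nth Nat.pred simple_mass].
    pose proof (IH Hs).
    assert (fst q * mu (snd q) <= Rmax (fst q) 0 * mu (snd q))
      by (apply Rmult_le_compat_r; [apply measure_ge0; auto | apply Rmax_l]).
    lra.
Qed.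

(* A simple function below [g] on a partition is, after clipping its coefficients at 0,
   one of the lower sums defining the integral. *)
Lemma partition_mass_le_integral g v d : nonneg_integral mu g v -> (forall x, 0 <= g x) ->
  simple_partition d -> (forall x, simple_eval d x <= g x) -> simple_mass mu d <= v.
Proof.
  intros [Hub _] Hg [Hb Hc] Hle.
  assert (Hin : forall i x, snd (nth i d empty_piece) x -> In (nth i d empty_piece) d).
  { intros i x Hx; destruct (nth_in_or_default i d empty_piece) as [|E]; auto.
    rewrite E in Hx; destruct Hx. }
  eapply Rle_trans; [apply simple_mass_le_lower_sum; exact Hb|]; apply Hub.
  exists (length d), (fun i => Rmax (fst (nth i d empty_piece)) 0),
    (fun i => snd (nth i d empty_piece)).
  split; [|split; [|split; [|split]]].
  - intros i _; destruct (nth_in_or_default i d empty_piece) as [Hi|E];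
      [apply Hb, Hi | rewrite E; apply borel_empty].
  - intros i j x _ _; apply partition_nth_disjoint; intro y; rewrite Hc; lra.
  - intros i _; apply Rmax_r.
  - intros i x _ Hx; apply Rmax_lub; auto.
    rewrite <- (simple_eval_in_piece d _ x) by (try (rewrite Hc; lra); eauto); auto.
  - reflexivity.
Qed.

Lemma simple_mass_le_integral g v s : nonneg_integral mu g v -> (forall x, 0 <= g x) ->
  simple_borel s -> (forall x, simple_eval s x <= g x) -> simple_mass mu s <= v.
Proof.
  intros Hi Hg Hb Hle; destruct (partition_of_simple s Hb) as [d [Hd [Hv Hm]]].
  rewrite <- Hm; apply (partition_mass_le_integral g v d); auto.
  intro x; rewrite Hv; auto.
Qed.

Lemma integral_approx_below f v : nonneg_integral mu f v -> (forall x, 0 <= f x) ->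
  forall eps, 0 < eps -> exists s, simple_borel s /\
    (forall x, simple_eval s x <= f x) /\ v - eps < simple_mass mu s.
Proof.
  intros [_ Hlub] Hf eps Heps; apply NNPP; intro Hn.
  assert (is_upper_bound (lower_sums mu f) (v - eps)).
  { intros w [n [a [A [Hb [Hd [_ [Ha ->]]]]]]]; apply Rnot_lt_le; intro Hlt; apply Hn.
    exists (indexed_simple a A n); split; [|split].
    - apply indexed_simple_borel; auto.
    - intro x; rewrite indexed_simple_eval; apply lower_sum_eval_le; auto.
    - rewrite indexed_simple_mass; exact Hlt. }
  pose proof (Hlub _ H); lra.
Qed.

Lemma integral_ge_combination g v f1 v1 f2 v2 c1 c2 d E c0 :
  nonneg_integral mu g v -> (forall x, 0 <= g x) ->
  nonneg_integral mu f1 v1 -> (forall x, 0 <= f1 x) ->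
  nonneg_integral mu f2 v2 -> (forall x, 0 <= f2 x) ->
  0 <= c1 -> 0 <= c2 -> borel E ->
  (forall x, c1 * f1 x + c2 * f2 x + d * indicator E x + c0 <= g x) ->
  c1 * v1 + c2 * v2 + d * mu E + c0 <= v.
Proof.
  intros Ig Hg I1 Hf1 I2 Hf2 Hc1 Hc2 HE Hle; apply Rle_plus_epsilon; intros eps Heps.
  set (delta := eps / (c1 + c2 + 1)).
  assert (Hdelta : 0 < delta) by (apply Rdiv_lt_0_compat; lra).
  assert (Heps' : (c1 + c2) * delta <= eps).
  { replace eps with ((c1 + c2 + 1) * delta) by (unfold delta; field; lra); nra. }
  destruct (integral_approx_below f1 v1 I1 Hf1 delta Hdelta) as [s1 [Hb1 [Hv1 Hs1]]].
  destruct (integral_approx_below f2 v2 I2 Hf2 delta Hdelta) as [s2 [Hb2 [Hv2 Hs2]]].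
  set (s := simple_scale c1 s1 ++ simple_scale c2 s2 ++ (d, E) :: (c0, fun _ => True) :: nil).
  assert (Hs : simple_mass mu s <= v).
  { apply (simple_mass_le_integral g); auto.
    - apply simple_borel_app; [apply simple_borel_scale; auto|].
      apply simple_borel_app; [apply simple_borel_scale; auto|].
      intros p [<-|[<-|[]]]; auto using borel_full.
    - intro x; unfold s; rewrite !simple_eval_app, !simple_eval_scale; simpl.
      rewrite (indicator_in (fun _ => True)) by trivial.
      specialize (Hle x); specialize (Hv1 x); specialize (Hv2 x).
      assert (c1 * simple_eval s1 x <= c1 * f1 x) by (apply Rmult_le_compat_l; auto).
      assert (c2 * simple_eval s2 x <= c2 * f2 x) by (apply Rmult_le_compat_l; auto).
      lra. }
  unfold s in Hs; rewrite !simple_mass_app, !simple_mass_scale in Hs; simpl in Hs.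
  rewrite measure_full in Hs.
  assert (c1 * (v1 - delta) <= c1 * simple_mass mu s1) by (apply Rmult_le_compat_l; lra).
  assert (c2 * (v2 - delta) <= c2 * simple_mass mu s2) by (apply Rmult_le_compat_l; lra).
  lra.
Qed.

Lemma integral_zero f v : nonneg_integral mu f v -> (forall x, f x = 0) -> v = 0.
Proof.
  intros [Hub Hlub] Hf; apply Rle_antisym.
  - apply Hlub; intros w [n [a [A [_ [_ [Ha0 [Ha ->]]]]]]].
    rewrite sum_eq_R0; [lra|]; intros i Hi.
    destruct (classic (exists x, A i x)) as [[x Hx]|Hn].
    + pose proof (Ha i x Hi Hx); pose proof (Ha0 i Hi); rewrite Hf in *.
      replace (a i) with 0 by lra; ring.
    + rewrite (measure_ext (A i) (fun _ => False)), measure_empty by firstorder; ring.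
  - apply Hub; exists 0%nat, (fun _ => 0), (fun _ _ => False).
    split; [|split; [|split; [|split]]]; intros; try contradiction; auto using borel_empty.
    + lra.
    + simpl; rewrite measure_empty; ring.
Qed.

End ProbabilityMeasure.

Lemma integral_ext mu f g v : nonneg_integral mu f v -> (forall x, f x = g x) ->
  nonneg_integral mu g v.
Proof. intros H E; replace g with f by (apply functional_extensionality; exact E); exact H. Qed.

(** * Moment estimates *)

Lemma markov_inequality mu h v E c : is_prob_measure mu ->
  nonneg_integral mu h v -> (forall x, 0 <= h x) -> borel E -> (forall x, E x -> c <= h x) ->
  c * mu E <= v.
Proof.
  intros Hmu Ih Hh HE Hc.
  enough (0 * v + 0 * v + c * mu E + 0 <= v) by lra.
  apply (integral_ge_combination mu Hmu h v h v h v); auto; try lra.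
  intro x; destruct (indicator_cases E x) as [[Hx ->]|[Hx ->]];
    [specialize (Hc x Hx) | specialize (Hh x)]; lra.
Qed.

Lemma nonneg_moment mu n m : is_prob_measure mu -> (forall x, 0 <= x ^ n) ->
  has_moment mu n m -> nonneg_integral mu (fun x => Rmax (x ^ n) 0) m.
Proof.
  intros Hmu Hn [p [q [Ip [Iq ->]]]].
  replace q with 0; [replace (p - 0) with p by ring; exact Ip|].
  symmetry; apply (integral_zero mu Hmu _ q Iq); intro x; apply Rmax_right.
  specialize (Hn x); lra.
Qed.

Lemma centered_first_moment mu : has_moment mu 1 0 -> exists t,
  nonneg_integral mu (fun x => Rmax x 0) t /\ nonneg_integral mu (fun x => Rmax (- x) 0) t.
Proof.
  intros [p [q [Ip [Iq E]]]]; exists p; split;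
    [apply (integral_ext _ _ _ _ Ip) | replace p with q by lra; apply (integral_ext _ _ _ _ Iq)];
    intro x; rewrite pow_1; reflexivity.
Qed.

Lemma sq_dev_ge_positive_part e z i : 0 < e < 1 ->
  (1 - e <= z /\ i = 1) \/ (~ 1 - e <= z /\ i = 0) ->
  e^2 * (Rmax z 0 - i) - e^4 / 4 <= (z^2 - 1)^2.
Proof.
  intros He Hi; assert (0 <= (z^2 - 1)^2) by apply pow2_ge_0.
  destruct (Rle_or_lt z 0) as [Hz|Hz].
  - rewrite Rmax_right by lra.
    assert (0 <= i) by (destruct Hi as [[_ ->]|[_ ->]]; lra); nra.
  - rewrite Rmax_left by lra; destruct Hi as [[Hz1 ->]|[Hz1 ->]].
    + assert (0 <= (z - 1 - e^2/2)^2) by apply pow2_ge_0.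
      assert (0 <= (z - 1)^2 * ((z + 1)^2 - 1)) by (apply Rmult_le_pos; [apply pow2_ge_0 | nra]).
      nra.
    + assert (e <= 1 - z^2) by nra; nra.
Qed.

Section FourthMoment.

Variables (mu : (R -> Prop) -> R) (m4 t : R).
Hypothesis mu_prob : is_prob_measure mu.
Hypothesis second_moment : nonneg_integral mu (fun x => Rmax (x ^ 2) 0) 1.
Hypothesis fourth_moment : nonneg_integral mu (fun x => Rmax (x ^ 4) 0) m4.
Hypothesis positive_part : nonneg_integral mu (fun x => Rmax x 0) t.
Hypothesis negative_part : nonneg_integral mu (fun x => Rmax (- x) 0) t.

Lemma sq_dev_comparison f v c d E c0 :
  nonneg_integral mu f v -> (forall x, 0 <= f x) -> 0 <= c -> borel E ->
  (forall x, c * f x + d * indicator E x + c0 <= (x^2 - 1)^2) ->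
  c * v + d * mu E + c0 <= m4 - 1.
Proof.
  intros If Hf Hc HE Hle.
  enough (c * v + 2 * 1 + d * mu E + (c0 - 1) <= m4) by lra.
  apply (integral_ge_combination mu mu_prob (fun x => Rmax (x ^ 4) 0) m4 f v
                                  (fun x => Rmax (x ^ 2) 0) 1); auto using Rmax_r; try lra.
  intro x; specialize (Hle x).
  rewrite (Rmax_left (x^4)), (Rmax_left (x^2)) by
    (try replace (x^4) with ((x^2)^2) by ring; apply pow2_ge_0).
  lra.
Qed.

Lemma sq_dev_tail E d : borel E -> (forall x, E x -> d <= (x^2 - 1)^2) -> d * mu E <= m4 - 1.
Proof.
  intros HE Hd.
  enough (0 * 1 + d * mu E + 0 <= m4 - 1) by lra.
  apply (sq_dev_comparison _ _ _ _ _ _ second_moment); auto using Rmax_r; try lra.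
  intro x; assert (0 <= (x^2 - 1)^2) by apply pow2_ge_0.
  destruct (indicator_cases E x) as [[Hx ->]|[Hx ->]]; [specialize (Hd x Hx)|]; lra.
Qed.

Lemma scaled_first_moment sg : sg = 1 \/ sg = -1 ->
  nonneg_integral mu (fun x => Rmax (sg * x) 0) t /\
  nonneg_integral mu (fun x => Rmax (- (sg * x)) 0) t.
Proof.
  intros [-> | ->]; split;
    first [ apply (integral_ext _ _ _ _ positive_part); intro x; f_equal; ring
          | apply (integral_ext _ _ _ _ negative_part); intro x; f_equal; ring ].
Qed.

Lemma half_line_mass sg e : sg = 1 \/ sg = -1 -> 0 < e < 1 -> 343 * (m4 - 1) <= 8 * e^3 ->
  1/2 - e <= mu (fun x => 1 - e <= sg * x).
Proof.
  intros Hsg He Hsmall.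
  assert (Hsq : forall x, x^2 = (sg * x)^2) by (intro x; destruct Hsg as [-> | ->]; ring).
  destruct (scaled_first_moment sg Hsg) as [Ipos Ineg].
  set (P := fun x => 1 - e <= sg * x).
  set (N := fun x => 1 - e <= - sg * x).
  set (M := fun x => ~ (P x \/ N x)).
  assert (HP : borel P) by apply borel_ge_scaled.
  assert (HN : borel N) by apply borel_ge_scaled.
  assert (HPN : mu (fun x => P x \/ N x) = mu P + mu N).
  { apply measure_disjoint_or; auto; unfold P, N; intros x H1 H2; lra. }
  assert (HM : mu M = 1 - mu P - mu N).
  { unfold M; rewrite measure_compl, HPN by auto using borel_or; ring. }
  assert (Hmid : e^2 * mu M <= m4 - 1).
  { apply sq_dev_tail; [apply borel_compl, borel_or; auto|].
    intros x Hx; rewrite (Hsq x); unfold M, P, N in Hx.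
    apply not_or_and in Hx; destruct Hx as [Hp Hn].
    apply Rnot_le_lt in Hp; apply Rnot_le_lt in Hn.
    assert (Hz : - (1 - e) < sg * x < 1 - e) by lra.
    set (z := sg * x) in *.
    assert (e <= 1 - z^2) by nra.
    replace ((z^2 - 1)^2) with ((1 - z^2)^2) by ring; apply pow_incr; lra. }
  assert (Hneg : (1 - e) * mu N <= t).
  { apply (markov_inequality mu (fun x => Rmax (- (sg * x)) 0)); auto using Rmax_r.
    intros x Hx; unfold N in Hx; pose proof (Rmax_l (- (sg * x)) 0); lra. }
  assert (Hpos : e^2 * t + - e^2 * mu P + - (e^4 / 4) <= m4 - 1).
  { apply (sq_dev_comparison (fun x => Rmax (sg * x) 0)); auto using Rmax_r, pow2_ge_0.
    intro x; rewrite (Hsq x).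
    pose proof (sq_dev_ge_positive_part e (sg * x) (indicator P x) He (indicator_cases P x)).
    lra. }
  assert (He2 : 0 < e^2) by nra.
  assert (mu M <= 8 * e / 343) by (apply Rmult_le_reg_l with (e^2); nra).
  assert (t <= mu P + e^2 / 4 + 8 * e / 343) by (apply Rmult_le_reg_l with (e^2); nra).
  pose proof (measure_ge0 mu mu_prob M ltac:(apply borel_compl, borel_or; auto)).
  nra.
Qed.

Lemma levy_ok_bern e : 0 < e -> 343 * (m4 - 1) <= 8 * e^3 -> levy_ok (cdf mu) bern_cdf e.
Proof.
  intros He Hsmall; split; [lra|]; intro x.
  assert (Hcdf : forall y, 0 <= cdf mu y <= 1)
    by (intro y; split; [apply measure_ge0 | apply measure_le1]; auto using borel_le).
  assert (Hbern : 0 <= bern_cdf x <= 1) by (unfold bern_cdf; repeat destruct Rlt_dec; lra).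
  destruct (Rlt_or_le e 1) as [He1|He1];
    [| pose proof (Hcdf (x - e)); pose proof (Hcdf (x + e)); lra].
  assert (Hright : 1/2 - e <= mu (fun y => 1 - e <= 1 * y)) by (apply half_line_mass; auto).
  assert (Hleft : 1/2 - e <= mu (fun y => 1 - e <= -1 * y)) by (apply half_line_mass; auto).
  assert (Htail : forall E, borel E -> (forall y, E y -> 1 + e <= Rabs y) -> mu E <= e).
  { intros E HE HEy.
    assert (4 * e^2 * mu E <= m4 - 1).
    { apply sq_dev_tail; auto; intros y Hy; specialize (HEy y Hy).
      assert (2 * e <= y^2 - 1) by (rewrite <- (pow2_abs y); nra); nra. }
    assert (0 < e^2) by nra; apply Rmult_le_reg_l with (4 * e^2); nra. }
  assert (Hsub : forall A B, borel A -> borel B -> (forall y, A y -> B y) -> mu A <= mu B)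
    by (intros; apply measure_mono; auto).
  unfold bern_cdf, cdf; destruct (Rlt_dec x (-1)); [|destruct (Rlt_dec x 1)].
  - pose proof (Htail (fun y => y <= x - e) (borel_le _)
      ltac:(intros y Hy; rewrite Rabs_left by lra; lra)).
    pose proof (measure_ge0 mu mu_prob _ (borel_le (x + e))); lra.
  - split.
    + pose proof (Hsub (fun y => y <= x - e) (fun y => ~ 1 - e <= 1 * y) (borel_le _)
        ltac:(apply borel_compl, borel_ge_scaled) ltac:(intros; lra)).
      rewrite measure_compl in * by (auto; apply borel_ge_scaled); lra.
    + pose proof (Hsub (fun y => 1 - e <= -1 * y) (fun y => y <= x + e)
        ltac:(apply borel_ge_scaled) (borel_le _) ltac:(intros; lra)); lra.
  - pose proof (Htail (fun y => ~ y <= x + e) (borel_compl _ (borel_le _))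
      ltac:(intros y Hy; rewrite Rabs_right by lra; lra)).
    rewrite measure_compl in * by (auto; apply borel_le).
    pose proof (Hcdf (x - e)); unfold cdf in *; lra.
Qed.

End FourthMoment.

Theorem mainTheorem4 (mu : (R -> Prop) -> R) :
  is_prob_measure mu ->
  has_moment mu 1 0 ->
  has_moment mu 2 1 ->
  forall m4 : R, has_moment mu 4 m4 ->
  forall L : R, levy_dist (cdf mu) bern_cdf L ->
  forall r : R, 0 <= r -> r ^ 3 = m4 - 1 ->
  L <= 7 / 2 * r.
Proof.
  intros Hmu M1 M2 m4 M4 L [HL _] r Hr Hr3.
  destruct (centered_first_moment mu M1) as [t [Ipos Ineg]].
  assert (I2 := nonneg_moment mu 2 1 Hmu pow2_ge_0 M2).
  assert (I4 : nonneg_integral mu (fun x => Rmax (x ^ 4) 0) m4).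
  { apply nonneg_moment; auto; intro x; replace (x ^ 4) with ((x ^ 2) ^ 2) by ring;
      apply pow2_ge_0. }
  apply Rle_plus_epsilon; intros eps Heps; apply HL.
  apply (levy_ok_bern mu m4 t); auto; [lra|].
  rewrite <- Hr3; replace (343 * r ^ 3) with (8 * (7 / 2 * r) ^ 3) by field.
  apply Rmult_le_compat_l; [lra|]; apply pow_incr; lra.
Qed.
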